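(* Let $\Phi$ be the historical operator. For each of the following axioms there exists a standard rule $R$ satisfying the standard version of the axiom such that the general rule $\Phi(R)$ violates the general version of that axiom: claims monotonicity, composition up, composition down, self-duality, population monotonicity, and consistency.
   Context: Agents are elements of $\mathbb{N}$; $N$ denotes a nonempty finite subset of $\mathbb{N}$. A (standard) claims problem is a triple $(N,c,E)$ with $c\in\mathbb{R}_+^N$, $E\in\mathbb{R}_+$, $C=\sum_{i\in N}c_i>0$ and $E\le C$. An allocation for it is $x\in\mathbb{R}^N$ with $0\le x_i\le c_i$ and $\sum_ix_i=E$. A standard rule $R$ assigns to each standard claims problem an allocation $R(N,c,E)$. A history for $N$ is a finite sequence $h=\{(c^{(t)},x^{(t)})\}_{t=1}^{|T|}$ where for each $t$, $c^{(t)}\in\mathbb{R}_+^N$ and $x^{(t)}$ is an allocation of the standard problem $(N,c^{(t)},\sum_ix_i^{(t)})$. A historical claims problem is $(N,c,E,h)$ with $(N,c,E)$ a standard claims problem and $h$ a history for $N$; a general rule $S$ assigns to each an allocation of $(N,c,E)$. For $M\subseteq N$, $h_M$ denotes the history obtained by restricting every $c^{(t)}$ and $x^{(t)}$ to coordinates in $M$. Let $\Delta^c_i=\sum_tc^{(t)}_i$, $\Delta^x_i=\sum_tx^{(t)}_i$, $\widetilde{c}_i=c_i+\Delta^c_i-\Delta^x_i$. Historical operator: for a standard rule $R$, $\Phi_i(R)(N,c,E,h)=\min\{c_i,R_i(N,\widetilde{c},E)+\lambda\}$, where $\lambda\in\mathbb{R}_+$ is such that these amounts sum to $E$ (such $\lambda$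 exists and the resulting vector does not depend on its choice). Standard axioms: claims monotonicity: for $i\in N$ and $c'_i>c_i$, $R_i(N,(c'_i,c_{-i}),E)\ge R_i(N,c,E)$; composition up: for $E_1,E_2>0$ with $E_1+E_2=E$, $R(N,c,E)=R(N,c,E_1)+R(N,c-R(N,c,E_1),E_2)$; composition down: for $E<E'\le C$, $R(N,c,E)=R(N,R(N,c,E'),E)$; self-duality: $R(N,c,C-E)=c-R(N,c,E)$; population monotonicity: if $N\subseteq N'$, $(N',c',E)$ is a problem with $c'_N=c$, then $R_i(N',c',E)\le R_i(N,c,E)$ for all $i\in N$; consistency: for $M\subset N$ and $i\in M$, $R_i(N,c,E)=R_i(M,c_M,\sum_{k\in M}R_k(N,c,E))$. General axioms: the same conditions for $S$ with the history held fixed: claims monotonicity: $S_i(N,(c'_i,c_{-i}),E,h)\ge S_i(N,c,E,h)$ for $c'_i>c_i$; composition up: $S(N,c,E,h)=S(N,c,E_1,h)+S(N,c-S(N,c,E_1,h),E_2,h)$; composition down: $S(N,c,E,h)=S(N,S(N,c,E',h),E,h)$ for $E<E'\le C$; self-duality: $S(N,c,C-E,h)=c-S(N,c,E,h)$; population monotonicity: if $N\subseteq N'$, $c'_N=c$ and $h'_N=h$, then $S_i(N',c',E,h')\le S_i(N,c,E,h)$ for all $i\in N$; consistency: for $M\subset N$, $i\in M$, $S_i(N,c,E,h)=S_i(M,c_M,E_M,h_M)$ with $E_M=\sum_{k\in M}S_k(N,c,E,h)$. *)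

(* R : realType (mathcomp-analysis reals), agents nat,
   agent sets {fset nat} (finmap), vectors nat -> R read only on N. *)
From HB Require Import structures.
From mathcomp Require Import all_boot all_order all_algebra finmap.
From mathcomp Require Import boolp classical_sets reals.
Set Implicit Arguments. Unset Strict Implicit. Unset Printing Implicit Defensive.
Import Order.TTheory GRing.Theory Num.Theory.
Local Open Scope ring_scope.

Section Claims.
Variable R : realType.

Definition vec := nat -> R.
(* a history: list of periods (c^(t), x^(t)) *)
Definition hist := seq (vec * vec).
Definition srule := {fset nat} -> vec -> R -> vec.
Definition grule := {fset nat} -> vec -> R -> hist -> vec.

Definition total (N : {fset nat}) (v : vec) : R := \sum_(i <- N) v i.

Definition valid_prob (N : {fset nat}) (c : vec) (E : R) : Prop :=
  N != fset0 /\ (forall i, i \in N -> 0 <= c i) /\ 0 <= E /\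
  0 < total N c /\ E <= total N c.

Definition is_alloc (N : {fset nat}) (c : vec) (E : R) (x : vec) : Prop :=
  (forall i, i \in N -> 0 <= x i <= c i) /\ total N x = E.

Definition valid_hist (N : {fset nat}) (h : hist) : Prop :=
  forall p, p \in h ->
    valid_prob N p.1 (total N p.2) /\ is_alloc N p.1 (total N p.2) p.2.

Definition valid_hprob N c E h := valid_prob N c E /\ valid_hist N h.

Definition agree (N : {fset nat}) (u v : vec) := forall i, i \in N -> u i = v i.

Definition hist_agree (N : {fset nat}) (h' h : hist) : Prop :=
  size h' = size h /\
  forall t, (t < size h)%N ->
    agree N (nth (fun _ => 0, fun _ => 0) h' t).1 (nth (fun _ => 0, fun _ => 0) h t).1 /\
    agree N (nth (fun _ => 0, fun _ => 0) h' t).2 (nth (fun _ => 0, fun _ => 0) h t).2.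

Definition standard_rule (r : srule) : Prop :=
  (forall N c E, valid_prob N c E -> is_alloc N c E (r N c E)) /\
  (forall N c c' E, valid_prob N c E -> agree N c c' -> agree N (r N c E) (r N c' E)).

Definition upd (c : vec) (i : nat) (v : R) : vec := fun j => if j == i then v else c j.
Definition vsub (u v : vec) : vec := fun j => u j - v j.

Definition Delta_c (h : hist) (i : nat) : R := \sum_(p <- h) p.1 i.
Definition Delta_x (h : hist) (i : nat) : R := \sum_(p <- h) p.2 i.
Definition ctilde (c : vec) (h : hist) : vec := fun i => c i + Delta_c h i - Delta_x h i.

Definition phi (r : srule) : grule := fun N c E h =>
  let rt := r N (ctilde c h) E in
  let lam := xget 0 (fun l : R =>
               0 <= l /\ \sum_(i <- N) Num.min (c i) (rt i + l) = E) in
  fun i => Num.min (c i) (rt i + lam).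

Definition claims_mono (r : srule) : Prop :=
  forall N c E i ci', valid_prob N c E -> i \in N -> c i < ci' ->
    r N c E i <= r N (upd c i ci') E i.

Definition comp_up (r : srule) : Prop :=
  forall N c E1 E2, valid_prob N c (E1 + E2) -> 0 < E1 -> 0 < E2 ->
    agree N (r N c (E1 + E2)) (fun i => r N c E1 i + r N (vsub c (r N c E1)) E2 i).

Definition comp_down (r : srule) : Prop :=
  forall N c E E', valid_prob N c E' -> 0 <= E -> E < E' ->
    agree N (r N c E) (r N (r N c E') E).

Definition self_dual (r : srule) : Prop :=
  forall N c E, valid_prob N c E ->
    agree N (r N c (total N c - E)) (vsub c (r N c E)).

Definition pop_mono (r : srule) : Prop :=
  forall N N' c c' E, (N `<=` N')%fset -> valid_prob N c E -> valid_prob N' c' E ->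
    agree N c' c -> forall i, i \in N -> r N' c' E i <= r N c E i.

Definition consistency (r : srule) : Prop :=
  forall N M c E, (M `<` N)%fset -> valid_prob N c E ->
    valid_prob M c (total M (r N c E)) ->
    agree M (r N c E) (r M c (total M (r N c E))).

Definition gclaims_mono (S : grule) : Prop :=
  forall N c E h i ci', valid_hprob N c E h -> i \in N -> c i < ci' ->
    S N c E h i <= S N (upd c i ci') E h i.

Definition gcomp_up (S : grule) : Prop :=
  forall N c E1 E2 h, valid_hprob N c (E1 + E2) h -> 0 < E1 -> 0 < E2 ->
    agree N (S N c (E1 + E2) h)
      (fun i => S N c E1 h i + S N (vsub c (S N c E1 h)) E2 h i).

Definition gcomp_down (S : grule) : Prop :=
  forall N c E E' h, valid_hprob N c E' h -> 0 <= E -> E < E' ->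
    agree N (S N c E h) (S N (S N c E' h) E h).

Definition gself_dual (S : grule) : Prop :=
  forall N c E h, valid_hprob N c E h ->
    agree N (S N c (total N c - E) h) (vsub c (S N c E h)).

Definition gpop_mono (S : grule) : Prop :=
  forall N N' c c' E h h', (N `<=` N')%fset -> valid_hprob N c E h -> valid_hprob N' c' E h' ->
    agree N c' c -> hist_agree N h' h ->
    forall i, i \in N -> S N' c' E h' i <= S N c E h i.

(* c_M and h_M are represented by c and h themselves (vectors are read on M only) *)
Definition gconsistency (S : grule) : Prop :=
  forall N M c E h, (M `<` N)%fset -> valid_hprob N c E h ->
    valid_hprob M c (total M (S N c E h)) h ->
    agree M (S N c E h) (S M c (total M (S N c E h)) h).

End Claims.

(* Phi(R) applies R to the adjusted claims c + Delta^c - Delta^x but then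
   truncates at the current claims c and returns the excess in equal amounts
   lambda.  A single past period with claims d in which nothing was awarded
   makes the adjusted claims c + d, so R rewards claims an agent no longer has
   and the truncation redistributes that reward evenly rather than in the
   pattern R uses.  Small two- and three-agent examples of this break
   composition down, self-duality, population monotonicity and consistency for
   the proportional rule.  Composition up is broken for the rule that first
   serves agent 0 and divides the rest proportionally, and claims monotonicity
   for the rule that switches from this priority rule to the proportional rule
   once agent 2 claims 1: the switch is monotone in the claim of agent 2
   because serving agent 0 first never gives another agent more than the
   proportional rule, but under Phi whatever goes to agent 0, whose current
   claim is 0, is spread evenly, and after the switch agent 2's proportional
   share does not make up for the smaller amount spread. *)

From Pilot Require Import Defs.
From HB Require Import structures.
From mathcomp Require Import all_boot all_order all_algebra finmap.
From mathcomp Require Import boolp classical_sets reals.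
From mathcomp Require Import ring lra.
Set Implicit Arguments. Unset Strict Implicit. Unset Printing Implicit Defensive.
Import Order.TTheory GRing.Theory Num.Theory.
Local Open Scope fset_scope.
Local Open Scope ring_scope.
Local Notation total := Defs.total.

Section HistoricalOperator.
Variable R : realType.
Implicit Types (N : {fset nat}) (c d x : vec R) (E : R) (h : hist R) (r : srule R).

Lemma total_ge0 N c : (forall i, i \in N -> 0 <= c i) -> 0 <= total N c.
Proof. by move=> c0; rewrite /total big_seq; apply: sumr_ge0. Qed.

Lemma total_fsetD1 N c i : i \in N -> total N c = c i + total (N `\ i) c.
Proof. by move=> iN; rewrite /total (big_fsetD1 i). Qed.

Lemma eq_total N c c' : agree N c c' -> total N c = total N c'.
Proof. by move=> cc'; rewrite /total big_seq [RHS]big_seq; apply: eq_bigr => i /cc'. Qed.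

Lemma totalB N c x : total N (vsub c x) = total N c - total N x.
Proof. exact: sumrB. Qed.

Lemma total_upd N c i v : i \in N -> total N (upd c i v) = v + total (N `\ i) c.
Proof.
move=> iN; rewrite (total_fsetD1 _ iN) /upd eqxx; congr (_ + _).
by apply: eq_total => j; rewrite in_fsetD1 => /andP[/negPf ->].
Qed.

Lemma total_fsubset N N' c : N `<=` N' ->
  (forall i, i \in N' -> 0 <= c i) -> total N c <= total N' c.
Proof.
move=> /fsubsetP NN' c0; rewrite /total [leRHS](big_fsetID _ (mem N)) /=.
have -> : \sum_(i <- [fset x in N' | x \in N]) c i = \sum_(i <- N) c i.
  by apply: eq_fbigl => i; rewrite !inE /= andb_idl // => /NN'.
rewrite lerDl big_seq; apply: sumr_ge0 => i; rewrite !inE /= => /andP[iN' _].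
exact: c0.
Qed.

Lemma eq_sum_le N (f g : nat -> R) : (forall i, i \in N -> f i <= g i) ->
  \sum_(i <- N) f i = \sum_(i <- N) g i -> forall i, i \in N -> f i = g i.
Proof.
move=> fg sfg i iN; apply/eqP; rewrite eq_sym -subr_eq0.
have /allP/(_ i iN) : all (fun j => (j \in N) ==> (g j - f j == 0)) N.
  rewrite -psumr_eq0 => [|j /fg]; last by rewrite subr_ge0.
  by rewrite -big_seq sumrB sfg subrr.
by rewrite iN.
Qed.

Lemma phiE r N c E h lam : 0 <= lam ->
  \sum_(i <- N) Num.min (c i) (r N (ctilde c h) E i + lam) = E ->
  forall i, i \in N -> phi r N c E h i = Num.min (c i) (r N (ctilde c h) E i + lam).
Proof.
set s := r N (ctilde c h) E; set S := fun l i => Num.min (c i) (s i + l).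
have eqS a b : a <= b -> \sum_(i <- N) S a i = \sum_(i <- N) S b i ->
    forall i, i \in N -> S a i = S b i.
  move=> ab; apply: eq_sum_le => j _.
  by rewrite /S le_min !ge_min lexx lerD2l ab !orbT.
move=> lam0 sE; rewrite /phi -/s; set P := fun l => _.
have [l0 sl] : P (xget 0 P) by apply: (@xgetI _ 0 P lam).
have [le_l|/ltW lt_l] := leP lam (xget 0 P) => i iN.
- by apply/esym/eqS; rewrite ?sl ?sE.
- by apply: eqS; rewrite ?sl ?sE.
Qed.

Lemma min_subD (a b e : R) : 0 <= e ->
  Num.min a b + Num.min (a - Num.min a b) e = Num.min a (b + e).
Proof.
move=> e0; have [ab|ba] := leP a b; first by rewrite !min_l; lra.
have [be|eb] := leP (a - b) e; first by rewrite min_l; lra.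
by rewrite min_r; lra.
Qed.

Lemma share_bounds (E C a : R) : 0 <= E <= C -> 0 <= a -> 0 <= E * a / C <= a.
Proof.
move=> /andP[E0 EC] a0; have [C0|C0] := eqVneq C 0.
  by rewrite C0 invr0 mulr0 lexx.
have Cp : 0 < C by rewrite lt_def C0; lra.
by rewrite divr_ge0 ?mulr_ge0 ?ler_pdivrMr //=; [nra | lra].
Qed.

Lemma ler_share (E x y K : R) : 0 <= E -> 0 <= x <= y -> 0 <= K ->
  E * x / (x + K) <= E * y / (y + K).
Proof.
move=> E0 /andP[x0 xy] K0; have [xK0|xK0] := eqVneq (x + K) 0.
  by rewrite xK0 invr0 mulr0 divr_ge0 ?mulr_ge0 //; lra.
have xKp : 0 < x + K by rewrite lt_def xK0; lra.
rewrite ler_pdivrMr // mulrAC ler_pdivlMr; last lra.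
suff : 0 <= E * K * (y - x) by nra.
by rewrite !mulr_ge0 // subr_ge0.
Qed.

Definition prop_rule : srule R := fun N c E i => E * c i / total N c.

Lemma prop_rule_agree N c c' E : agree N c c' -> agree N (prop_rule N c E) (prop_rule N c' E).
Proof. by move=> cc' i iN; rewrite /prop_rule (cc' i iN) (eq_total cc'). Qed.

Lemma total_prop_rule_eq M N c E : total M (prop_rule N c E) = E * total M c / total N c.
Proof. by rewrite /total -mulr_suml -mulr_sumr. Qed.

Lemma total_prop_rule N c E : total N c != 0 -> total N (prop_rule N c E) = E.
Proof. by move=> C0; rewrite total_prop_rule_eq mulfK. Qed.

Lemma prop_rule_std : standard_rule prop_rule.
Proof.
split; last by move=> N c c' E _; apply: prop_rule_agree.
move=> N c E [_ [c0 [E0 [C0 EC]]]]; split; last by rewrite total_prop_rule ?gt_eqF.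
by move=> i iN; rewrite share_bounds ?E0 ?c0.
Qed.

Lemma prop_rule_upd_mono N c E i ci' : 0 <= E -> (forall j, j \in N -> 0 <= c j) ->
  i \in N -> c i <= ci' -> prop_rule N c E i <= prop_rule N (upd c i ci') E i.
Proof.
move=> E0 c0 iN le_ci; rewrite /prop_rule total_upd // (total_fsetD1 c iN) /upd eqxx.
rewrite ler_share ?c0 ?le_ci //; apply: total_ge0 => j.
by rewrite in_fsetD1 => /andP[_ /c0].
Qed.

Lemma prop_rule_claims_mono : claims_mono prop_rule.
Proof.
move=> N c E i ci' [_ [c0 [E0 _]]] iN /ltW.
exact: prop_rule_upd_mono.
Qed.

Lemma prop_rule_compose N c E1 E2 i : total N c = 0 \/ E1 < total N c ->
  prop_rule N c E1 i + prop_rule N (vsub c (prop_rule N c E1)) E2 i =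
  prop_rule N c (E1 + E2) i.
Proof.
move=> hC; rewrite {2}/prop_rule totalB total_prop_rule_eq /vsub /prop_rule.
have [C0|C0] := eqVneq (total N c) 0.
  by rewrite C0 !(invr0, mulr0, subr0, oppr0, add0r).
have CE1 : total N c - E1 != 0.
  by case: hC => [/eqP C0'|E1C]; [rewrite C0' in C0 | rewrite subr_eq0 gt_eqF].
by rewrite mulfK //; field; rewrite C0 CE1.
Qed.

Lemma prop_rule_comp_down : comp_down prop_rule.
Proof.
move=> N c E E' [_ [_ [_ [C0 _]]]] E0 EE' i _.
rewrite {2}/prop_rule total_prop_rule ?gt_eqF // /prop_rule.
by field; rewrite !gt_eqF //; lra.
Qed.

Lemma prop_rule_self_dual : self_dual prop_rule.
Proof.
move=> N c E [_ [_ [_ [C0 _]]]] i _.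
by rewrite /prop_rule /vsub; field; rewrite gt_eqF.
Qed.

Lemma prop_rule_pop_mono : pop_mono prop_rule.
Proof.
move=> N N' c c' E NN' [_ [c0 [E0 [C0 _]]]] [_ [c0' _]] cc' i iN.
have le_C : total N c <= total N' c' by rewrite -(eq_total cc') total_fsubset.
by rewrite /prop_rule (cc' i iN) ler_wpM2l ?mulr_ge0 ?c0 // lef_pV2 ?posrE //; lra.
Qed.

Lemma prop_rule_consistency : consistency prop_rule.
Proof.
move=> N M c E _ [_ [_ [_ [C0 _]]]] [_ [_ [_ [CM0 _]]]] i _.
rewrite total_prop_rule_eq /prop_rule.
by field; rewrite !gt_eqF.
Qed.

Definition priority_share N c E : R := if 0%N \in N then Num.min (c 0%N) E else 0.

Definition priority_rule : srule R := fun N c E i =>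
  if i == 0%N then priority_share N c E
  else prop_rule (N `\ 0%N) c (E - priority_share N c E) i.

Lemma priority_rule0 N c E : priority_rule N c E 0%N = priority_share N c E.
Proof. by []. Qed.

Lemma priority_ruleN0 N c E i : i != 0%N ->
  priority_rule N c E i = prop_rule (N `\ 0%N) c (E - priority_share N c E) i.
Proof. by rewrite /priority_rule => /negPf ->. Qed.

Lemma total_split0 N c :
  total N c = (if 0%N \in N then c 0%N else 0) + total (N `\ 0%N) c.
Proof. by case: ifP => N0; [apply: total_fsetD1 | rewrite add0r mem_fsetD1 ?N0]. Qed.

Lemma total_fsetD0_ge0 N c : (forall i, i \in N -> 0 <= c i) -> 0 <= total (N `\ 0%N) c.
Proof. by move=> c0; apply: total_ge0 => j; rewrite in_fsetD1 => /andP[_ /c0]. Qed.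

Lemma priority_share_bounds N c E : valid_prob N c E ->
  [/\ 0 <= priority_share N c E, priority_share N c E <= E,
      (0%N \in N -> priority_share N c E <= c 0%N) &
      E - priority_share N c E <= total (N `\ 0%N) c].
Proof.
move=> [_ [c0 [E0 [_ EC]]]]; have S0 := total_fsetD0_ge0 c0.
move: EC; rewrite total_split0 /priority_share.
case: ifP => [/c0 c00|_] EC; last by split => //; lra.
by case: (leP (c 0%N) E) => ?; split; try move=> _; lra.
Qed.

Lemma total_priority_rule N c E : valid_prob N c E -> total N (priority_rule N c E) = E.
Proof.
move=> vp; have [_ eE _ eS] := priority_share_bounds vp.
pose p := prop_rule (N `\ 0%N) c (E - priority_share N c E).
rewrite total_split0 priority_rule0 (eq_total (c' := p)); last first.
  by move=> j; rewrite in_fsetD1 => /andP[j0 _]; rewrite priority_ruleN0.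
have -> : (if 0%N \in N then priority_share N c E else 0) = priority_share N c E.
  by rewrite /priority_share; case: ifP => [->|].
have [S0|S0] := eqVneq (total (N `\ 0%N) c) 0.
  by rewrite total_prop_rule_eq S0 invr0 mulr0; rewrite S0 in eS; lra.
by rewrite total_prop_rule //; lra.
Qed.

Lemma priority_rule_std : standard_rule priority_rule.
Proof.
split=> [N c E vp|N c c' E _ cc' i iN].
  have [e0 eE ec0 eS] := priority_share_bounds vp; have [_ [c0 _]] := vp.
  split=> [i iN|]; last exact: total_priority_rule.
  case: (eqVneq i 0%N) iN => [-> | i0] iN; first by rewrite priority_rule0 e0 ec0.
  by rewrite priority_ruleN0 // share_bounds ?c0 // eS; lra.
have eS : priority_share N c E = priority_share N c' E.
  by rewrite /priority_share; case: ifP => // /cc' ->.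
have [-> | i0] := eqVneq i 0%N; first by rewrite !priority_rule0.
rewrite !priority_ruleN0 // eS; apply: prop_rule_agree => [j|].
  by rewrite in_fsetD1 => /andP[_ /cc'].
by rewrite in_fsetD1 i0.
Qed.

Lemma priority_shareD N c E1 E2 : 0 <= E2 ->
  priority_share N c E1 + priority_share N (vsub c (priority_rule N c E1)) E2 =
  priority_share N c (E1 + E2).
Proof.
move=> E20; rewrite {2}/priority_share /vsub priority_rule0 /priority_share.
by case: ifP => _; rewrite ?min_subD ?addr0.
Qed.

Lemma priority_residual N c E1 E2 : valid_prob N c (E1 + E2) -> 0 < E2 ->
  total (N `\ 0%N) c = 0 \/ E1 - priority_share N c E1 < total (N `\ 0%N) c.
Proof.
move=> [_ [c0 [_ [_ EC]]]] E2p; have S0 := total_fsetD0_ge0 c0.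
have [S00|S00] := eqVneq (total (N `\ 0%N) c) 0; [by left | right].
have Sp : 0 < total (N `\ 0%N) c by rewrite lt_def S00 S0.
move: EC; rewrite total_split0 /priority_share.
by case: ifP => _ EC; [case: (leP (c 0%N) E1) => ? |]; lra.
Qed.

Lemma priority_rule_comp_up : comp_up priority_rule.
Proof.
move=> N c E1 E2 vp _ E2p i iN /=.
have [-> | i0] := eqVneq i 0%N; first by rewrite !priority_rule0 priority_shareD ?ltW.
have i_in : i \in N `\ 0%N by rewrite in_fsetD1 i0.
rewrite !priority_ruleN0 // -priority_shareD ?ltW //.
set a := priority_share N c E1; set b := priority_share N _ E2.
rewrite (@prop_rule_agree _ (vsub c (priority_rule N c E1))
  (vsub c (prop_rule (N `\ 0%N) c (E1 - a))) _ _ _ i_in).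
  rewrite prop_rule_compose; last exact: priority_residual vp E2p.
  by congr prop_rule; ring.
by move=> j; rewrite in_fsetD1 => /andP[j0 _]; rewrite /vsub priority_ruleN0.
Qed.

Lemma priority_rule_claims_mono : claims_mono priority_rule.
Proof.
move=> N c E i ci' vp iN lt_ci; have [_ [c0 [E0 _]]] := vp.
have [_ eE _ _] := priority_share_bounds vp.
case: (eqVneq i 0%N) iN lt_ci => [-> | i0] iN lt_ci.
  rewrite !priority_rule0 /priority_share iN /upd eqxx.
  by rewrite le_min !ge_min lexx orbT andbT (ltW lt_ci).
rewrite !priority_ruleN0 //.
have -> : priority_share N (upd c i ci') E = priority_share N c E.
  by rewrite /priority_share /upd eq_sym (negPf i0).
rewrite prop_rule_upd_mono ?(ltW lt_ci) //; first lra.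
  by move=> j; rewrite in_fsetD1 => /andP[_ /c0].
by rewrite in_fsetD1 i0.
Qed.

Lemma priority_rule_le_prop N c E i : valid_prob N c E -> 0%N \in N -> i \in N ->
  i != 0%N -> priority_rule N c E i <= prop_rule N c E i.
Proof.
move=> [_ [c0 [E0 [_ EC]]]] N0 iN i0; have S0 := total_fsetD0_ge0 c0.
move: EC; rewrite priority_ruleN0 // /prop_rule (total_split0 N c) /priority_share N0.
set S := total _ c => EC; have ci0 := c0 i iN; have c00 := c0 0%N N0.
have [S00|S00] := eqVneq S 0.
  by rewrite S00 invr0 mulr0 divr_ge0 ?mulr_ge0 //; lra.
have Sp : 0 < S by rewrite lt_def S00 S0.
have [c0E|Ec0] := leP (c 0%N) E; last by rewrite subrr !mul0r divr_ge0 ?mulr_ge0 //; lra.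
rewrite ler_pdivrMr // mulrAC ler_pdivlMr; last lra.
suff : 0 <= c i * c 0%N * (c 0%N + S - E) by nra.
by rewrite !mulr_ge0 // subr_ge0.
Qed.

Definition threshold_rule : srule R := fun N c E =>
  if [&& 0%N \in N, 2%N \in N & c 2%N < 1] then priority_rule N c E else prop_rule N c E.

Lemma threshold_rule_std : standard_rule threshold_rule.
Proof.
have [[pr_alloc pr_agree] [prop_alloc prop_agree]] := (priority_rule_std, prop_rule_std).
split=> [N c E vp|N c c' E vp cc'].
  by rewrite /threshold_rule; case: ifP => _; [apply: pr_alloc | apply: prop_alloc].
rewrite /threshold_rule.
have -> : [&& 0%N \in N, 2%N \in N & c' 2%N < 1] = [&& 0%N \in N, 2%N \in N & c 2%N < 1].
  by case N2: (2%N \in N); rewrite ?andbF // (cc' _ N2).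
by case: ifP => _; [apply: pr_agree | apply: prop_agree].
Qed.

Lemma threshold_rule_claims_mono : claims_mono threshold_rule.
Proof.
move=> N c E i ci' vp iN lt_ci; rewrite /threshold_rule.
have [i2|i2] := eqVneq i 2%N; last first.
  rewrite /upd eq_sym (negPf i2) -/(upd c i ci').
  by case: ifP => _; [apply: priority_rule_claims_mono | apply: prop_rule_claims_mono].
move: iN lt_ci; rewrite i2 => iN lt_ci; rewrite iN {1}/upd eqxx /=.
case N0: (0%N \in N) => /=; last exact: prop_rule_claims_mono.
case: (ltP (c 2%N) 1) => c2; case: (ltP ci' 1) => ci'2; try lra.
- exact: priority_rule_claims_mono.
- apply: le_trans (priority_rule_le_prop vp N0 iN _) _ => //.
  exact: prop_rule_claims_mono.
- exact: prop_rule_claims_mono.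
Qed.

Definition vec3 (a b e : R) : vec R := nth 0 [:: a; b; e].

Definition hist1 d : hist R := [:: (d, fun=> 0)].

Definition N2 : {fset nat} := [fset 0%N; 1%N].
Definition N3 : {fset nat} := [fset 0%N; 1%N; 2%N].

Lemma sum_N2 (f : nat -> R) : \sum_(i <- N2) f i = f 0%N + f 1%N.
Proof. by rewrite /N2 big_fsetU1 ?inE //= big_seq_fset1. Qed.

Lemma sum_N3 (f : nat -> R) : \sum_(i <- N3) f i = f 0%N + f 1%N + f 2%N.
Proof. by rewrite /N3 -fsetUA !big_fsetU1 ?inE //= big_seq_fset1 addrA. Qed.

Lemma total_N3D0 c : total (N3 `\ 0%N) c = c 1%N + c 2%N.
Proof. by have := total_split0 N3 c; rewrite !inE /= {1}/total sum_N3; lra. Qed.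

Lemma priority_share_N3 c E : priority_share N3 c E = Num.min (c 0%N) E.
Proof. by rewrite /priority_share !inE. Qed.

Lemma threshold_rule_N3 c E :
  threshold_rule N3 c E = if c 2%N < 1 then priority_rule N3 c E else prop_rule N3 c E.
Proof. by rewrite /threshold_rule !inE. Qed.

Lemma N2_sub_N3 : N2 `<=` N3.
Proof. by apply/fsubsetP => i; rewrite !inE => /orP[]/eqP->. Qed.

Lemma N2_lt_N3 : N2 `<` N3.
Proof.
rewrite fproperE N2_sub_N3; apply/fsubsetP => /(_ 2%N).
by rewrite !inE => /(_ isT).
Qed.

Lemma vec3_ge0 a b e : 0 <= a -> 0 <= b -> 0 <= e -> forall i, 0 <= vec3 a b e i.
Proof. by move=> a0 b0 e0 [|[|[|i]]]; rewrite /vec3 /= ?nth_nil. Qed.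

Lemma ctilde_hist1 c d : ctilde c (hist1 d) = (fun i => c i + d i).
Proof.
by apply: funext => i; rewrite /ctilde /Delta_c /Delta_x !big_seq1 /= subr0.
Qed.

Lemma valid_hprob_hist1 N c d E : 0%N \in N -> (forall i, 0 <= c i) -> (forall i, 0 <= d i) ->
  0 < total N c -> 0 <= E -> E <= total N c -> 0 < total N d -> valid_hprob N c E (hist1 d).
Proof.
move=> N0 c0 d0 C0 E0 EC D0; have N_neq0 : N != fset0 by apply/fset0Pn; exists 0%N.
split; first by do !split.
move=> p; rewrite mem_seq1 => /eqP -> /=.
have zero : total N (fun=> 0 : R) = 0 by exact: big1_seq.
by do !split => // *; rewrite ?zero ?lexx ?d0 //; apply: ltW.
Qed.

Lemma phi_hist1_at r N c d E lam i v : 0 <= lam -> i \in N ->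
  \sum_(j <- N) Num.min (c j) (r N (fun j => c j + d j) E j + lam) = E ->
  Num.min (c i) (r N (fun j => c j + d j) E i + lam) = v ->
  phi r N c E (hist1 d) i = v.
Proof. by rewrite -ctilde_hist1 => lam0 iN sE <-; apply: phiE. Qed.

(* Matching backtracks over the occurrences of [Num.min], so nested minima are
   settled from the inside out. *)
Ltac num_solve :=
  repeat match goal with x := _ |- _ => subst x end; unfold vec3, upd; simpl;
  repeat match goal with |- context [Num.min ?a ?b] =>
    first [rewrite [Num.min a b]min_l; last by lra | rewrite [Num.min a b]min_r; last by lra]
  end; lra.

Ltac total_value := unfold Defs.total; rewrite ?sum_N2 ?sum_N3; num_solve.

Ltac valid_hist1 := apply: valid_hprob_hist1;
  [by rewrite !inE | apply: vec3_ge0; lra | apply: vec3_ge0; lra | total_value ..].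

Tactic Notation "phi_value" uconstr(lam) constr(rules) :=
  apply (@phi_hist1_at _ _ _ _ _ lam); [lra | by rewrite !inE | |];
  rewrite ?sum_N2 ?sum_N3 ?rules; unfold priority_rule, prop_rule, vsub;
  rewrite ?priority_share_N3 ?rules; num_solve.

Lemma phi_prop_not_gself_dual : ~ gself_dual (phi prop_rule).
Proof.
pose c := vec3 1 1 0; pose d := vec3 1 0 0.
have T : total N2 (fun i => c i + d i) = 3 by total_value.
have C : total N2 c = 2 by total_value.
have x0 : phi prop_rule N2 c 1 (hist1 d) 0%N = 2/3 by phi_value 0 T.
move=> /(_ N2 c 1 (hist1 d)) sd.
have := sd ltac:(valid_hist1) 0%N ltac:(by rewrite !inE).
by rewrite C (_ : 2 - 1 = 1) /vsub ?x0 /c /vec3 /=; lra.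
Qed.

Lemma phi_prop_not_gcomp_down : ~ gcomp_down (phi prop_rule).
Proof.
pose c := vec3 1 1 0; pose d := vec3 1 0 0.
have T : total N2 (fun i => c i + d i) = 3 by total_value.
set x := phi prop_rule N2 c (3/2) (hist1 d).
have x0 : x 0%N = 1 by phi_value 0 T.
have x1 : x 1%N = 1/2 by phi_value 0 T.
have Tx : total N2 (fun i => x i + d i) = 5/2.
  by rewrite /total sum_N2 x0 x1 /d /vec3 /=; lra.
move=> /(_ N2 c 1 (3/2) (hist1 d) ltac:(valid_hist1) ler01 ltac:(lra) 0%N).
rewrite -/x => /(_ ltac:(by rewrite !inE)).
have -> : phi prop_rule N2 c 1 (hist1 d) 0%N = 2/3 by phi_value 0 T.
have -> : phi prop_rule N2 x 1 (hist1 d) 0%N = 4/5 by phi_value 0 (Tx, x0, x1).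
lra.
Qed.

Lemma phi_prop_not_gconsistency : ~ gconsistency (phi prop_rule).
Proof.
pose c := vec3 1 1 1; pose d := vec3 0 1 3.
have T3 : total N3 (fun i => c i + d i) = 7 by total_value.
have T2 : total N2 (fun i => c i + d i) = 3 by total_value.
set x := phi prop_rule N3 c 2 (hist1 d).
have x0 : x 0%N = 5/14 by phi_value (1/14) T3.
have x1 : x 1%N = 9/14 by phi_value (1/14) T3.
have Ex : total N2 x = 1 by rewrite /total sum_N2 x0 x1; lra.
move=> /(_ N3 N2 c 2 (hist1 d) N2_lt_N3 ltac:(valid_hist1)).
rewrite -/x Ex => /(_ ltac:(valid_hist1) 0%N ltac:(by rewrite !inE)).
have -> : phi prop_rule N2 c 1 (hist1 d) 0%N = 1/3 by phi_value 0 T2.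
by rewrite x0; lra.
Qed.

Lemma phi_prop_not_gpop_mono : ~ gpop_mono (phi prop_rule).
Proof.
pose c := vec3 1 4 1; pose d := vec3 0 2 4.
have T3 : total N3 (fun i => c i + d i) = 12 by total_value.
have T2 : total N2 (fun i => c i + d i) = 7 by total_value.
have hd : hist_agree N2 (hist1 d) (hist1 d) by split => // t _; split.
move=> /(_ N2 N3 c c 4 (hist1 d) (hist1 d) N2_sub_N3 ltac:(valid_hist1) ltac:(valid_hist1)).
move=> /(_ (fun _ _ => erefl) hd 0%N ltac:(by rewrite !inE)).
have -> : phi prop_rule N3 c 4 (hist1 d) 0%N = 2/3 by phi_value (1/3) T3.
have -> : phi prop_rule N2 c 4 (hist1 d) 0%N = 4/7 by phi_value 0 T2.
lra.
Qed.

Lemma phi_priority_not_gcomp_up : ~ gcomp_up (phi priority_rule).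
Proof.
pose c := vec3 1 1 2; pose d := vec3 1 0 0.
have T : total (N3 `\ 0%N) (fun i => c i + d i) = 3 by rewrite total_N3D0; num_solve.
set x := phi priority_rule N3 c 2 (hist1 d).
have x0 : x 0%N = 1 by phi_value (1/2) T.
have x1 : x 1%N = 1/2 by phi_value (1/2) T.
have x2 : x 2%N = 1/2 by phi_value (1/2) T.
have Tx : total (N3 `\ 0%N) (fun i => vsub c x i + d i) = 2.
  by rewrite total_N3D0 /vsub x1 x2; num_solve.
move=> /(_ N3 c 2 1 (hist1 d) ltac:(valid_hist1) ltac:(lra) ltac:(lra) 1%N).
rewrite -/x x1 => /(_ ltac:(by rewrite !inE)).
have -> : phi priority_rule N3 c (2 + 1) (hist1 d) 1%N = 5/6 by phi_value (1/2) T.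
have -> : phi priority_rule N3 (vsub c x) 1 (hist1 d) 1%N = 1/2.
  by phi_value (1/2) (Tx, x0, x1, x2).
lra.
Qed.

Lemma phi_threshold_not_gclaims_mono : ~ gclaims_mono (phi threshold_rule).
Proof.
pose c := vec3 0 1 (1/2); pose d := vec3 1 1 0; pose c' := upd c 2%N 1.
have pri : threshold_rule N3 (fun i => c i + d i) 1 = priority_rule N3 (fun i => c i + d i) 1.
  by rewrite threshold_rule_N3 ifT //; num_solve.
have pro : threshold_rule N3 (fun i => c' i + d i) 1 = prop_rule N3 (fun i => c' i + d i) 1.
  by rewrite threshold_rule_N3 ifN // -leNgt; num_solve.
have T : total (N3 `\ 0%N) (fun i => c i + d i) = 5/2 by rewrite total_N3D0; num_solve.
have T' : total N3 (fun i => c' i + d i) = 4 by total_value.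
move=> /(_ N3 c 1 (hist1 d) 2%N 1 ltac:(valid_hist1) ltac:(by rewrite !inE) ltac:(num_solve)).
rewrite -/c'.
have -> : phi threshold_rule N3 c 1 (hist1 d) 2%N = 1/2 by phi_value (1/2) (pri, T).
have -> : phi threshold_rule N3 c' 1 (hist1 d) 2%N = 3/8 by phi_value (1/8) (pro, T').
lra.
Qed.

End HistoricalOperator.

Theorem theorem2 (R : realType) :
  (exists r : srule R, standard_rule r /\ claims_mono r /\ ~ gclaims_mono (phi r)) /\
  (exists r : srule R, standard_rule r /\ comp_up r /\ ~ gcomp_up (phi r)) /\
  (exists r : srule R, standard_rule r /\ comp_down r /\ ~ gcomp_down (phi r)) /\
  (exists r : srule R, standard_rule r /\ self_dual r /\ ~ gself_dual (phi r)) /\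
  (exists r : srule R, standard_rule r /\ pop_mono r /\ ~ gpop_mono (phi r)) /\
  (exists r : srule R, standard_rule r /\ consistency r /\ ~ gconsistency (phi r)).
Proof.
split.
  exists (@threshold_rule R); split; last split; [exact: threshold_rule_std |
    exact: threshold_rule_claims_mono | exact: phi_threshold_not_gclaims_mono].
split.
  exists (@priority_rule R); split; last split; [exact: priority_rule_std |
    exact: priority_rule_comp_up | exact: phi_priority_not_gcomp_up].
have std := @prop_rule_std R.
split; first by exists (@prop_rule R); split; last split;
  [| exact: prop_rule_comp_down | exact: phi_prop_not_gcomp_down].
split; first by exists (@prop_rule R); split; last split;
  [| exact: prop_rule_self_dual | exact: phi_prop_not_gself_dual].
split; first by exists (@prop_rule R); split; last split;
  [| exact: prop_rule_pop_mono | exact: phi_prop_not_gpop_mono].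
by exists (@prop_rule R); split; last split;
  [| exact: prop_rule_consistency | exact: phi_prop_not_gconsistency].
Qed.
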